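(* Let $X$ be a topological space that has a $\pi$-tree and let $C\subseteq X$ be at most countable. Then the subspace $X\setminus C$ has a $\pi$-tree.
   Context: A tree is a pair $\mathcal T=(Q,<)$ where $<$ is an irreflexive transitive relation on $Q$ such that for every $x\in Q$ the set $\{v\in Q:v<x\}$ is well-ordered by $<$. $\mathrm{sons}(x)=\{s: x<s$ and there is no $v$ with $x<v<s\}$. A branch is an inclusion-maximal set of pairwise comparable nodes. A foliage tree is a pair $\mathbf F=(\mathcal T,l)$ with $\mathcal T$ a tree (the skeleton) and $l$ a function on its nodes; $\mathbf F_x:=l(x)$ is the leaf at $x$. $\mathrm{fruit}_{\mathbf F}(A)=\bigcap_{x\in A}\mathbf F_x$; $\mathrm{shoot}_{\mathbf F}(z)=\{\bigcup_{s\in C'}\mathbf F_s: C'$ cofinite in $\mathrm{sons}(z)\}$; $\mathrm{scope}_{\mathbf F}(p)=\{y:p\in\mathbf F_y\}$; $\gamma\gg\delta$ means every nonempty $D\in\delta$ contains some nonempty $G\in\gamma$. A Baire foliage tree on a space $X$ is a foliage tree whose skeleton is isomorphic to $(\omega^{<\omega},\subsetneq)$, all of whose leaves are open in $X$, which is locally strict (for each non-maximal $x$, $\mathbf F_x$ is the disjoint union of $\mathbf F_s$, $s\in\mathrm{sons}(x)$), has strict branches (fruit of every branch is a singleton), and whose leaf at the least node is $X$. It grows into $X$ if for every $p\in X$ and every neighbourhood $U$ of $p$ there is $z\in\mathrm{scope}_{\mathbf F}(p)$ with $\mathrm{shoot}_{\mathbf F}(z)\gg\{U\}$. A $\pi$-tree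 on $X$ is a Baire foliage tree on $X$ that grows into $X$. *)

From Stdlib Require Import List.
Import ListNotations.
Set Implicit Arguments.

Definition is_topology (X : Type) (opn : (X -> Prop) -> Prop) : Prop :=
  opn (fun _ => True) /\
  (forall U V, opn U -> opn V -> opn (fun p => U p /\ V p)) /\
  (forall F : (X -> Prop) -> Prop, (forall U, F U -> opn U) ->
     opn (fun p => exists U, F U /\ U p)).

Definition compl_sub (X : Type) (C : X -> Prop) : Type := {x : X | ~ C x}.

Definition subspace_open (X : Type) (opn : (X -> Prop) -> Prop) (C : X -> Prop)
  (V : compl_sub C -> Prop) : Prop :=
  exists U, opn U /\ forall y : compl_sub C, V y <-> U (proj1_sig y).

Definition at_most_countable (X : Type) (C : X -> Prop) : Prop :=
  exists f : X -> nat, forall x y, C x -> C y -> f x = f y -> x = y.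

Definition is_tree (Q : Type) (lt : Q -> Q -> Prop) : Prop :=
  (forall x, ~ lt x x) /\
  (forall x y z, lt x y -> lt y z -> lt x z) /\
  (* {v | v < x} is well-ordered by < : linear, and every nonempty subset has a least element *)
  (forall x,
     (forall v w, lt v x -> lt w x -> v = w \/ lt v w \/ lt w v) /\
     (forall A : Q -> Prop, (exists v, A v /\ lt v x) ->
        exists m, A m /\ lt m x /\ forall v, A v -> lt v x -> m = v \/ lt m v)).

Definition sons (Q : Type) (lt : Q -> Q -> Prop) (x s : Q) : Prop :=
  lt x s /\ ~ (exists v, lt x v /\ lt v s).

Definition pairwise_comparable (Q : Type) (lt : Q -> Q -> Prop) (B : Q -> Prop) : Prop :=
  forall x y, B x -> B y -> x = y \/ lt x y \/ lt y x.

Definition branch (Q : Type) (lt : Q -> Q -> Prop) (B : Q -> Prop) : Prop :=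
  pairwise_comparable lt B /\
  forall B' : Q -> Prop, (forall x, B x -> B' x) -> pairwise_comparable lt B' ->
    forall x, B' x -> B x.

(** ω^{<ω} ordered by strict inclusion of graphs = strict prefix order on lists. *)
Definition sprefix (s u : list nat) : Prop := exists t, t <> [] /\ s ++ t = u.

Section Foliage.
Variables (X Q : Type) (lt : Q -> Q -> Prop) (l : Q -> X -> Prop).

Definition fruit (A : Q -> Prop) : X -> Prop := fun p => forall x, A x -> l x p.

Definition cofinite_in_sons (z : Q) (C' : Q -> Prop) : Prop :=
  (forall s, C' s -> sons lt z s) /\
  exists L : list Q, forall s, sons lt z s -> ~ C' s -> In s L.

(* shoot(z) as a family of subsets of X (membership up to extensional equality) *)
Definition shoot (z : Q) (G : X -> Prop) : Prop :=
  exists C', cofinite_in_sons z C' /\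
    forall p, G p <-> exists s, C' s /\ l s p.

Definition scope (p : X) (y : Q) : Prop := l y p.

Definition locally_strict : Prop :=
  forall x, (exists y, lt x y) ->
    (forall p, l x p <-> exists s, sons lt x s /\ l s p) /\
    (forall s s', sons lt x s -> sons lt x s' -> s <> s' -> forall p, ~ (l s p /\ l s' p)).

Definition strict_branches : Prop :=
  forall B, branch lt B -> exists p, forall q, fruit B q <-> q = p.
End Foliage.

Definition refines (X : Type) (gamma delta : (X -> Prop) -> Prop) : Prop :=
  forall D, delta D -> (exists p, D p) ->
    exists G, gamma G /\ (exists p, G p) /\ forall p, G p -> D p.

Definition singleton_family (X : Type) (U : X -> Prop) : (X -> Prop) -> Prop :=
  fun D => forall p, D p <-> U p.

Definition skeleton_is_baire (Q : Type) (lt : Q -> Q -> Prop) : Prop :=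
  exists phi : Q -> list nat,
    (forall x y, phi x = phi y -> x = y) /\
    (forall s, exists x, phi x = s) /\
    (forall x y, lt x y <-> sprefix (phi x) (phi y)).

Definition baire_foliage_tree (X : Type) (opn : (X -> Prop) -> Prop)
  (Q : Type) (lt : Q -> Q -> Prop) (l : Q -> X -> Prop) : Prop :=
  is_tree lt /\ skeleton_is_baire lt /\
  (forall x, opn (l x)) /\
  locally_strict lt l /\
  strict_branches lt l /\
  (forall r, (forall x, r = x \/ lt r x) -> forall p, l r p).

Definition neighbourhood (X : Type) (opn : (X -> Prop) -> Prop) (p : X) (N : X -> Prop) : Prop :=
  exists U, opn U /\ U p /\ forall q, U q -> N q.

Definition grows_into (X : Type) (opn : (X -> Prop) -> Prop)
  (Q : Type) (lt : Q -> Q -> Prop) (l : Q -> X -> Prop) : Prop :=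
  forall p N, neighbourhood opn p N ->
    exists z, scope l p z /\ refines (shoot lt l z) (singleton_family N).

Definition pi_tree (X : Type) (opn : (X -> Prop) -> Prop)
  (Q : Type) (lt : Q -> Q -> Prop) (l : Q -> X -> Prop) : Prop :=
  baire_foliage_tree opn lt l /\ grows_into opn lt l.

Definition has_pi_tree (X : Type) (opn : (X -> Prop) -> Prop) : Prop :=
  exists (Q : Type) (lt : Q -> Q -> Prop) (l : Q -> X -> Prop), pi_tree opn lt l.

(* Transport the pi-tree to the skeleton (list nat, strict prefix), with leaves L u, and
   rebuild it on X \ C.  The new nodes are cylinders L u and pairs L u ∪ L v of disjoint
   cylinders carrying distinguished points x ∈ L u, w ∈ L v, exactly one of them in C.
   When a cylinder meets C, its point c of C of least index is isolated by pairing the child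
   cylinder around c with a sibling cylinder; child 0 of a pair shrinks one half around its
   distinguished point and swaps the halves.  A branch that ends in pairs converges to {x, w}
   and its fruit in X \ C is the one of x, w outside C.  A branch through infinitely many
   cylinders converges inside their nested sequence, and the limit is not in C: the least
   indices of points of C in successive cylinders strictly increase, yet a point of C lying
   in all of them bounds them.  Growth survives since every old cylinder L u reappears as
   (half of) a node whose child n + 1 lies in an old child of u of index at least n. *)

From Stdlib Require Import List Lia Arith Classical ClassicalEpsilon.
Import ListNotations.
Set Implicit Arguments.
Unset Strict Implicit.

Definition is_prefix (a b : list nat) : Prop := exists t, a ++ t = b.

Lemma is_prefix_refl a : is_prefix a a.
Proof. exists []. apply app_nil_r. Qed.

Lemma is_prefix_trans a b c : is_prefix a b -> is_prefix b c -> is_prefix a c.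
Proof. intros [t1 <-] [t2 <-]. exists (t1 ++ t2). now rewrite app_assoc. Qed.

Lemma is_prefix_app a t : is_prefix a (a ++ t).
Proof. now exists t. Qed.

Lemma is_prefix_firstn a b j : is_prefix a b -> j <= length a -> firstn j a = firstn j b.
Proof.
  intros [t <-] H. rewrite firstn_app. replace (j - length a) with 0 by lia.
  now rewrite app_nil_r.
Qed.

Lemma firstn_is_prefix j a : is_prefix (firstn j a) a.
Proof. exists (skipn j a). apply firstn_skipn. Qed.

Lemma is_prefix_common a b x : is_prefix a x -> is_prefix b x -> is_prefix a b \/ is_prefix b a.
Proof.
  intros [t1 H1] [t2 H2]. rewrite <- H2 in H1. apply app_eq_app in H1.
  destruct H1 as [l [[-> _]|[-> _]]]; [right|left]; now exists l.
Qed.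

Lemma sprefix_is_prefix a b : sprefix a b -> is_prefix a b.
Proof. intros [t [_ H]]. now exists t. Qed.

Lemma sprefix_length a b : sprefix a b -> length a < length b.
Proof. intros [t [Ht <-]]. rewrite length_app. destruct t; [congruence | simpl; lia]. Qed.

Lemma sprefix_trans a b c : sprefix a b -> sprefix b c -> sprefix a c.
Proof.
  intros [t1 [H1 <-]] [t2 [_ <-]]. exists (t1 ++ t2).
  split; [destruct t1; simpl; congruence | now rewrite app_assoc].
Qed.

Lemma sprefix_snoc a n : sprefix a (a ++ [n]).
Proof. exists [n]. split; [congruence | reflexivity]. Qed.

Lemma is_prefix_cases a b : is_prefix a b -> a = b \/ sprefix a b.
Proof.
  intros [t <-]. destruct t as [|n t]; [left; symmetry; apply app_nil_r|].
  right. exists (n :: t). split; [congruence | reflexivity].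
Qed.

Lemma sprefix_comparable a b :
  is_prefix a b \/ is_prefix b a -> a = b \/ sprefix a b \/ sprefix b a.
Proof. intros [H|H]; destruct (is_prefix_cases H); auto. Qed.

Lemma is_tree_sprefix : is_tree sprefix.
Proof.
  split; [|split].
  - intros x H. apply sprefix_length in H. lia.
  - apply sprefix_trans.
  - intros x. split.
    + intros v w Hv Hw. apply sprefix_comparable.
      apply (is_prefix_common (sprefix_is_prefix Hv) (sprefix_is_prefix Hw)).
    + intros A [v [Av Hv]].
      induction v as [v IH] using (induction_ltof1 _ (@length nat)); unfold ltof in IH.
      destruct (classic (exists v', A v' /\ sprefix v' x /\ length v' < length v))
        as [[v' [Av' [Hv' Hlen]]]|Hmin]; [now apply (IH v')|].
      exists v. do 2 (split; auto). intros w Aw Hw.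
      destruct (sprefix_comparable (is_prefix_common (sprefix_is_prefix Hv) (sprefix_is_prefix Hw)))
        as [|[|]]; auto.
      exfalso. apply Hmin. exists w. auto using sprefix_length.
Qed.

Lemma sons_sprefix z s : sons sprefix z s <-> exists n, s = z ++ [n].
Proof.
  split.
  - intros [[[|n [|n' t]] [Ht Hs]] Hno]; [congruence | now exists n|].
    exfalso. apply Hno. exists (z ++ [n]). split; [apply sprefix_snoc|].
    exists (n' :: t). split; [congruence|]. now rewrite <- Hs, <- app_assoc.
  - intros [n ->]. split; [apply sprefix_snoc|].
    intros [v [H1 H2]]. apply sprefix_length in H1, H2. rewrite length_app in H2. simpl in H2. lia.
Qed.

Definition chain (s : nat -> list nat) : Prop := forall m, exists n, s (S m) = s m ++ [n].

Lemma chain_is_prefix s j j' : chain s -> j <= j' -> is_prefix (s j) (s j').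
Proof.
  intros Hs H. induction H; [apply is_prefix_refl|].
  destruct (Hs m) as [n ->]. eapply is_prefix_trans; [eassumption | apply is_prefix_app].
Qed.

Lemma chain_comparable s j j' : chain s -> is_prefix (s j) (s j') \/ is_prefix (s j') (s j).
Proof.
  intros Hs. destruct (Nat.le_ge_cases j j'); [left|right]; now apply chain_is_prefix.
Qed.

Lemma chain_length s j : chain s -> length (s j) = length (s 0) + j.
Proof.
  intros Hs. induction j; [lia|]. destruct (Hs j) as [n ->]. rewrite length_app. simpl. lia.
Qed.

Lemma firstn_succ (a : list nat) j : j < length a -> firstn (S j) a = firstn j a ++ [nth j a 0].
Proof.
  revert j. induction a as [|x a IH]; intros [|j] H; simpl in *; try lia; [reflexivity|].
  rewrite IH by lia. reflexivity.
Qed.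

Lemma chain_of_comparable (P : list nat -> Prop) :
  (forall a b, P a -> P b -> is_prefix a b \/ is_prefix b a) ->
  (forall j, exists a, P a /\ j <= length a) ->
  exists s, chain s /\ (forall j, exists a, P a /\ is_prefix (s j) a) /\
    (forall a, P a -> a = s (length a)).
Proof.
  intros Hcmp Hlong.
  set (a_ j := epsilon (inhabits []) (fun a => P a /\ j <= length a)).
  assert (Ha : forall j, P (a_ j) /\ j <= length (a_ j))
    by (intros j; apply epsilon_spec, Hlong).
  assert (Hcut : forall j a, P a -> j <= length a -> firstn j a = firstn j (a_ j)).
  { intros j a Pa Hj. destruct (Ha j) as [Pj Hj'].
    destruct (Hcmp _ _ Pa Pj); [|symmetry]; now apply is_prefix_firstn. }
  exists (fun j => firstn j (a_ j)). split; [|split].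
  - intros j. exists (nth j (a_ (S j)) 0). destruct (Ha (S j)) as [PS HS].
    rewrite firstn_succ by lia. f_equal. apply Hcut; [exact PS | lia].
  - intros j. exists (a_ j). split; [apply Ha | apply firstn_is_prefix].
  - intros a Pa. rewrite <- (Hcut _ a Pa (le_n _)). symmetry. apply firstn_all.
Qed.

Lemma branch_absorbs (Q : Type) (lt : Q -> Q -> Prop) (B : Q -> Prop) x :
  branch lt B -> (forall y, B y -> x = y \/ lt x y \/ lt y x) -> B x.
Proof.
  intros [Hpc Hmax] Hx. apply (Hmax (fun y => B y \/ y = x)); auto.
  intros a b [Ha| ->] [Hb| ->]; auto.
  destruct (Hx a Ha) as [|[|]]; auto.
Qed.

Section SprefixBranch.
Variable B : list nat -> Prop.
Hypothesis HB : branch sprefix B.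

Lemma branch_sprefix_nil : B [].
Proof.
  apply (branch_absorbs HB). intros [|n y] _; [now left|].
  right; left. exists (n :: y). split; [congruence | reflexivity].
Qed.

Lemma branch_sprefix_prefix z w : B z -> is_prefix w z -> B w.
Proof.
  intros Bz Hw. apply (branch_absorbs HB). intros y By. apply sprefix_comparable.
  destruct (proj1 HB y z By Bz) as [->|[Hyz|Hzy]]; auto.
  - now apply (is_prefix_common Hw (sprefix_is_prefix Hyz)).
  - left. exact (is_prefix_trans Hw (sprefix_is_prefix Hzy)).
Qed.

Lemma branch_sprefix_snoc z : B z -> exists n, B (z ++ [n]).
Proof.
  intros Bz. destruct (classic (exists z', B z' /\ sprefix z z')) as [[z' [Bz' [t [Ht Et]]]]|Hmax].
  - destruct t as [|n t]; [congruence|]. exists n. apply (branch_sprefix_prefix Bz').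
    exists t. now rewrite <- Et, <- app_assoc.
  - exists 0. apply (branch_absorbs HB). intros y By. right; right.
    destruct (proj1 HB y z By Bz) as [->|[Hyz|Hzy]]; [apply sprefix_snoc| |].
    + exact (sprefix_trans Hyz (sprefix_snoc z 0)).
    + exfalso. eauto.
Qed.

Lemma branch_sprefix_chain : exists g, chain g /\ forall z, B z <-> exists k, z = g k.
Proof.
  set (g := fix g k := match k with
    | 0 => []
    | S k => g k ++ [epsilon (inhabits 0) (fun n => B (g k ++ [n]))] end).
  assert (Bg : forall k, B (g k)).
  { induction k; [apply branch_sprefix_nil|].
    apply (epsilon_spec _ (fun n => B (g k ++ [n]))), branch_sprefix_snoc, IHk. }
  assert (Hg : chain g) by (intros k; eexists; reflexivity).
  exists g. split; [exact Hg|]. intros z. split; [|now intros [k ->]].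
  intros Bz. exists (length z).
  destruct (proj1 HB z (g (length z)) Bz (Bg _)) as [|[H|H]]; auto;
    apply sprefix_length in H; rewrite (chain_length _ Hg) in H; simpl in H; lia.
Qed.

End SprefixBranch.

Record list_pi_tree (X : Type) (opn : (X -> Prop) -> Prop) (L : list nat -> X -> Prop) : Prop := {
  leaf_root : forall p, L [] p;
  leaf_open : forall u, opn (L u);
  leaf_cover : forall u p, L u p <-> exists n, L (u ++ [n]) p;
  leaf_disjoint : forall u n n' p, n <> n' -> L (u ++ [n]) p -> L (u ++ [n']) p -> False;
  leaf_chain : forall s, chain s -> exists pt, forall q, (forall m, L (s m) q) <-> q = pt;
  leaf_grows : forall p W, opn W -> W p ->
    exists u, L u p /\ exists N, forall n, N <= n -> forall q, L (u ++ [n]) q -> W q }.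

Lemma antitone_of_snoc (X : Type) (L : list nat -> X -> Prop) :
  (forall u n p, L (u ++ [n]) p -> L u p) -> forall a b p, is_prefix a b -> L b p -> L a p.
Proof.
  intros Hsnoc a b p [t <-]. revert p.
  induction t as [|n t IH] using rev_ind; intros p H; [now rewrite app_nil_r in H|].
  apply IH, (Hsnoc _ n). now rewrite <- app_assoc.
Qed.

Section ListPiTree.
Variables (X : Type) (opn : (X -> Prop) -> Prop) (L : list nat -> X -> Prop).
Hypothesis HL : list_pi_tree opn L.

Lemma leaf_prefix a b p : is_prefix a b -> L b p -> L a p.
Proof. apply antitone_of_snoc. intros u n q Hq. apply (leaf_cover HL). eauto. Qed.

Lemma leaf_eq_length a b p : length a = length b -> L a p -> L b p -> a = b.
Proof.
  revert b. induction a as [|n a IH] using rev_ind; intros b Hlen Ha Hb.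
  - destruct b; [reflexivity | discriminate].
  - destruct b as [|n' b _] using rev_ind; [rewrite length_app in Hlen; simpl in Hlen; lia|].
    rewrite !length_app in Hlen. simpl in Hlen.
    assert (a = b) as <- by (apply IH; [lia | eapply leaf_prefix, Ha | eapply leaf_prefix, Hb];
                             apply is_prefix_app).
    destruct (Nat.eq_dec n n') as [<-|Hn]; [reflexivity|].
    exfalso. eapply (leaf_disjoint HL); eauto.
Qed.

Lemma leaf_comparable a b p : L a p -> L b p -> is_prefix a b \/ is_prefix b a.
Proof.
  intros Ha Hb. destruct (Nat.le_ge_cases (length a) (length b)); [left|right].
  - rewrite (@leaf_eq_length a (firstn (length a) b) p); [apply firstn_is_prefix | | exact Ha|].
    + rewrite length_firstn. lia.
    + exact (leaf_prefix (firstn_is_prefix _ _) Hb).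
  - rewrite (@leaf_eq_length b (firstn (length b) a) p); [apply firstn_is_prefix | | exact Hb|].
    + rewrite length_firstn. lia.
    + exact (leaf_prefix (firstn_is_prefix _ _) Ha).
Qed.

Lemma leaf_nonempty u : exists p, L u p.
Proof.
  destruct (leaf_chain HL (s := fun m => u ++ repeat 0 m)) as [pt Hpt].
  - intros m. exists 0. simpl. now rewrite repeat_cons, app_assoc.
  - exists pt. rewrite <- (app_nil_r u). exact (proj2 (Hpt pt) eq_refl 0).
Qed.

End ListPiTree.

Section BaireSkeleton.
Variables (X Q : Type) (opn : (X -> Prop) -> Prop) (lt : Q -> Q -> Prop) (l : Q -> X -> Prop).
Variables (phi : Q -> list nat) (psi : list nat -> Q).
Hypothesis phi_inj : forall x y, phi x = phi y -> x = y.
Hypothesis phi_psi : forall u, phi (psi u) = u.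
Hypothesis lt_sprefix : forall x y, lt x y <-> sprefix (phi x) (phi y).

Lemma psi_phi x : psi (phi x) = x.
Proof. apply phi_inj. now rewrite phi_psi. Qed.

Lemma lt_psi u v : lt (psi u) (psi v) <-> sprefix u v.
Proof. now rewrite lt_sprefix, !phi_psi. Qed.

Lemma sons_psi u s : sons lt (psi u) s <-> exists n, s = psi (u ++ [n]).
Proof.
  transitivity (sons sprefix u (phi s)).
  - unfold sons. rewrite lt_sprefix, phi_psi.
    split; intros [H1 H2]; split; auto; intros [v [V1 V2]]; apply H2.
    + exists (psi v). now rewrite !lt_sprefix, !phi_psi.
    + exists (phi v). now rewrite !lt_sprefix, phi_psi in *.
  - rewrite sons_sprefix. split; intros [n Hn]; exists n.
    + now rewrite <- Hn, psi_phi.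
    + now rewrite Hn, phi_psi.
Qed.

Lemma branch_of_chain s : chain s -> branch lt (fun x => exists m, is_prefix (phi x) (s m)).
Proof.
  intros Hs. split.
  - intros x y [m Hx] [m' Hy].
    assert (Hxy : is_prefix (phi x) (phi y) \/ is_prefix (phi y) (phi x)).
    { destruct (chain_comparable m m' Hs) as [H|H].
      - exact (is_prefix_common (is_prefix_trans Hx H) Hy).
      - exact (is_prefix_common Hx (is_prefix_trans Hy H)). }
    rewrite !lt_sprefix.
    destruct (sprefix_comparable Hxy) as [|[|]]; auto.
  - intros B Hsub Hpc x Hx.
    set (m := length (phi x)). set (a := firstn m (s m)).
    assert (Ba : B (psi a)) by (apply Hsub; exists m; rewrite phi_psi; apply firstn_is_prefix).
    assert (Hlen : length a = m)
      by (unfold a; rewrite length_firstn, (chain_length _ Hs); lia).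
    destruct (Hpc x (psi a) Hx Ba) as [E|[H|H]];
      [rewrite E; exists m; rewrite phi_psi; apply firstn_is_prefix | exfalso ..];
      rewrite lt_sprefix, phi_psi in H; apply sprefix_length in H; unfold m in Hlen; lia.
Qed.

Definition leaf_list (u : list nat) : X -> Prop := l (psi u).

Lemma leaf_list_sons u :
  locally_strict lt l ->
  (forall p, leaf_list u p <-> exists n, leaf_list (u ++ [n]) p) /\
  (forall n n' p, n <> n' -> leaf_list (u ++ [n]) p -> leaf_list (u ++ [n']) p -> False).
Proof.
  intros Hls. destruct (Hls (psi u)) as [Hcover Hdisj].
  { exists (psi (u ++ [0])). rewrite lt_psi. apply sprefix_snoc. }
  split.
  - intros p. unfold leaf_list. rewrite Hcover. split.
    + intros [s [Hs Hp]]. apply sons_psi in Hs as [n ->]. eauto.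
    + intros [n Hn]. exists (psi (u ++ [n])). rewrite sons_psi. eauto.
  - intros n n' p Hn H H'.
    assert (Hne : psi (u ++ [n]) <> psi (u ++ [n'])).
    { intros E. apply (f_equal phi) in E. rewrite !phi_psi in E.
      apply app_inj_tail in E. now destruct E. }
    refine (Hdisj _ _ _ _ Hne p (conj H H')); apply sons_psi; eauto.
Qed.

Lemma leaf_list_root : (forall r, (forall x, r = x \/ lt r x) -> forall p, l r p) ->
  forall p, leaf_list [] p.
Proof.
  intros Hroot. apply Hroot. intros x. rewrite <- (psi_phi x), lt_psi.
  destruct (phi x) as [|n u]; [now left|right]. exists (n :: u). split; [congruence | reflexivity].
Qed.

Lemma leaf_list_chain s : locally_strict lt l -> strict_branches lt l -> chain s ->
  exists pt, forall q, (forall m, leaf_list (s m) q) <-> q = pt.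
Proof.
  intros Hls Hsb Hs. destruct (Hsb _ (branch_of_chain Hs)) as [pt Hpt].
  exists pt. intros q. rewrite <- (Hpt q). unfold fruit, leaf_list. split.
  - intros H x [m Hx]. rewrite <- (psi_phi x).
    refine (@antitone_of_snoc _ leaf_list _ _ _ _ Hx (H m)).
    intros a n p Hp. apply (proj1 (leaf_list_sons _ Hls)). eauto.
  - intros H m. apply H. exists m. rewrite phi_psi. apply is_prefix_refl.
Qed.

Lemma leaf_list_grows : grows_into opn lt l -> forall p W, opn W -> W p ->
  exists u, leaf_list u p /\ exists N, forall n, N <= n -> forall q, leaf_list (u ++ [n]) q -> W q.
Proof.
  intros Hgr p W HW Wp.
  destruct (Hgr p W) as [z [Hz Href]]; [now exists W|].
  destruct (Href W) as [G [[C' [[HC' [sons_out Hout]] HG]] [_ HGW]]];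
    [unfold singleton_family; tauto | now exists p|].
  exists (phi z). split; [unfold leaf_list; now rewrite psi_phi|].
  exists (S (list_max (map (fun s => last (phi s) 0) sons_out))).
  intros n Hn q Hq. apply HGW, HG.
  assert (Hs : sons lt z (psi (phi z ++ [n]))) by (rewrite <- (psi_phi z) at 1; apply sons_psi; eauto).
  destruct (classic (C' (psi (phi z ++ [n])))) as [Hc|Hc]; [eauto|exfalso].
  assert (Hle : last (phi (psi (phi z ++ [n]))) 0 <= list_max (map (fun s => last (phi s) 0) sons_out)).
  { assert (Hmax := proj1 (list_max_le _ _) (le_n (list_max (map (fun s => last (phi s) 0) sons_out)))).
    rewrite Forall_forall in Hmax. apply Hmax, in_map_iff. eauto. }
  rewrite phi_psi, last_last in Hle. lia.
Qed.

End BaireSkeleton.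

Lemma list_pi_tree_of_has_pi_tree (X : Type) (opn : (X -> Prop) -> Prop) :
  has_pi_tree opn -> exists L, list_pi_tree opn L.
Proof.
  intros [Q [lt [l [[_ [[phi [Hinj [Hsurj Hlt]]] [Hopen [Hls [Hsb Hroot]]]]] Hgr]]]].
  destruct (choice _ Hsurj) as [psi Hpsi].
  exists (leaf_list l psi). split.
  - exact (leaf_list_root Hinj Hpsi Hlt Hroot).
  - intros u. apply Hopen.
  - intros u. exact (proj1 (leaf_list_sons Hinj Hpsi Hlt u Hls)).
  - intros u. exact (proj2 (leaf_list_sons Hinj Hpsi Hlt u Hls)).
  - intros s. exact (leaf_list_chain Hinj Hpsi Hlt Hls Hsb).
  - exact (leaf_list_grows Hinj Hpsi Hlt Hgr).
Qed.

Section ToPiTree.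
Variables (X : Type) (opn : (X -> Prop) -> Prop) (L : list nat -> X -> Prop).
Hypothesis HL : list_pi_tree opn L.

Lemma locally_strict_list : locally_strict sprefix L.
Proof.
  intros z _. split.
  - intros p. rewrite (leaf_cover HL). split.
    + intros [n Hn]. exists (z ++ [n]). rewrite sons_sprefix. eauto.
    + intros [s [Hs Hp]]. apply sons_sprefix in Hs as [n ->]. eauto.
  - intros s s' Hs Hs' Hne p [Hp Hp'].
    apply sons_sprefix in Hs as [n ->], Hs' as [n' ->].
    refine (leaf_disjoint HL _ Hp Hp'). congruence.
Qed.

Lemma strict_branches_list : strict_branches sprefix L.
Proof.
  intros B HB. destruct (branch_sprefix_chain HB) as [g [Hg HBg]].
  destruct (leaf_chain HL Hg) as [pt Hpt]. exists pt. intros q. rewrite <- Hpt.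
  unfold fruit. split.
  - intros H k. apply H, HBg. eauto.
  - intros H x Bx. apply HBg in Bx as [k ->]. apply H.
Qed.

Lemma grows_into_list : grows_into opn sprefix L.
Proof.
  intros p N [U [HU [Up HUN]]].
  destruct (leaf_grows HL HU Up) as [z [Hz [N0 HN0]]].
  exists z. split; [exact Hz|]. intros D HD _.
  set (C' := fun s => exists n, N0 <= n /\ s = z ++ [n]).
  exists (fun q => exists s, C' s /\ L s q). split; [|split].
  - exists C'. split; [|tauto]. split.
    + intros s [n [_ ->]]. apply sons_sprefix. eauto.
    + exists (map (fun k => z ++ [k]) (seq 0 N0)). intros s Hs HnC.
      apply sons_sprefix in Hs as [k ->]. apply in_map_iff. exists k. split; [reflexivity|].
      apply in_seq. destruct (Nat.lt_ge_cases k N0); [lia|]. exfalso. apply HnC. now exists k.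
  - destruct (leaf_nonempty HL (z ++ [N0])) as [q Hq]. exists q, (z ++ [N0]). split; [|exact Hq].
    exists N0. auto.
  - intros q [s [[n [Hn ->]] Hq]]. apply HD, HUN. exact (HN0 n Hn q Hq).
Qed.

Lemma pi_tree_of_list_pi_tree : pi_tree opn sprefix L.
Proof.
  split; [split; [|split; [|split; [|split; [|split]]]]|].
  - apply is_tree_sprefix.
  - exists (fun u => u). split; [|split]; eauto. reflexivity.
  - apply (leaf_open HL).
  - apply locally_strict_list.
  - apply strict_branches_list.
  - intros r Hr p. destruct (Hr []) as [->|H]; [apply (leaf_root HL)|].
    apply sprefix_length in H. simpl in H. lia.
  - apply grows_into_list.
Qed.

End ToPiTree.

Lemma open_union2 (X : Type) (opn : (X -> Prop) -> Prop) (A B : X -> Prop) :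
  is_topology opn -> opn A -> opn B -> exists U, opn U /\ forall p, U p <-> A p \/ B p.
Proof.
  intros [_ [_ Hunion]] HA HB.
  exists (fun p => exists U, (U = A \/ U = B) /\ U p). split.
  - apply Hunion. now intros U [-> | ->].
  - intros p. split; [intros [U [[-> | ->] H]]; auto | intros [H|H]; eauto].
Qed.

Definition skip (e n : nat) : nat := if n <? e then n else S n.
Definition skip2 (b n : nat) : nat := if n <? b then n else S (S n).

Lemma skip_neq e n : skip e n <> e.
Proof. unfold skip. destruct (Nat.ltb_spec n e); lia. Qed.

Lemma skip_ge e n : n <= skip e n.
Proof. unfold skip. destruct (Nat.ltb_spec n e); lia. Qed.

Lemma skip_inj e n n' : skip e n = skip e n' -> n = n'.
Proof. unfold skip. destruct (Nat.ltb_spec n e), (Nat.ltb_spec n' e); lia. Qed.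

Lemma skip_surj e k : k <> e -> exists n, skip e n = k.
Proof.
  intros H. destruct (Nat.ltb_spec k e); [exists k | exists (pred k)]; unfold skip;
    [destruct (Nat.ltb_spec k e) | destruct (Nat.ltb_spec (pred k) e)]; lia.
Qed.

Lemma skip2_neq b n : skip2 b n <> b.
Proof. unfold skip2. destruct (Nat.ltb_spec n b); lia. Qed.

Lemma skip2_neq_succ b n : skip2 b n <> S b.
Proof. unfold skip2. destruct (Nat.ltb_spec n b); lia. Qed.

Lemma skip2_ge b n : n <= skip2 b n.
Proof. unfold skip2. destruct (Nat.ltb_spec n b); lia. Qed.

Lemma skip2_inj b n n' : skip2 b n = skip2 b n' -> n = n'.
Proof. unfold skip2. destruct (Nat.ltb_spec n b), (Nat.ltb_spec n' b); lia. Qed.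

Lemma skip2_surj b k : k <> b -> k <> S b -> exists n, skip2 b n = k.
Proof.
  intros H H'. destruct (Nat.ltb_spec k b); [exists k | exists (k - 2)]; unfold skip2;
    [destruct (Nat.ltb_spec k b) | destruct (Nat.ltb_spec (k - 2) b)]; lia.
Qed.

Section Complement.
Variables (X : Type) (opn : (X -> Prop) -> Prop) (C : X -> Prop) (f : X -> nat).
Variable L : list nat -> X -> Prop.
Hypothesis f_inj : forall x y, C x -> C y -> f x = f y -> x = y.
Hypothesis HL : list_pi_tree opn L.

Lemma leaf_meets_compl u : exists q, L u q /\ ~ C q.
Proof.
  (* Diagonalise against the enumeration f of C: at depth m, leave the child
     containing the point of C with index m. *)
  set (step w m := if excluded_middle_informative
                        (exists c, C c /\ f c = m /\ L (w ++ [0]) c) then 1 else 0).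
  set (s := fix s m := match m with 0 => u | S m => s m ++ [step (s m) m] end).
  destruct (leaf_chain HL (s := s)) as [pt Hpt]; [intros m; eexists; reflexivity|].
  assert (Hall : forall m, L (s m) pt) by (apply Hpt; reflexivity).
  exists pt. split; [exact (Hall 0)|]. intros Cpt.
  specialize (Hall (S (f pt))). simpl in Hall. unfold step in Hall.
  destruct excluded_middle_informative as [[c [Cc [Hc Lc]]]|Hnone].
  - rewrite (f_inj Cc Cpt Hc) in Lc. refine (leaf_disjoint HL _ Lc Hall). lia.
  - apply Hnone. eauto.
Qed.

Lemma X_inhabited : inhabited X.
Proof. destruct (leaf_nonempty HL []) as [p _]. exact (inhabits p). Qed.

Definition dir (x : X) (u : list nat) : nat := epsilon (inhabits 0) (fun n => L (u ++ [n]) x).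

Definition meets_C (u : list nat) : Prop := exists c, C c /\ L u c.

Definition least_C (u : list nat) : X :=
  epsilon X_inhabited (fun c => C c /\ L u c /\ forall c', C c' -> L u c' -> f c <= f c').

Definition outside_C (u : list nat) : X := epsilon X_inhabited (fun q => L u q /\ ~ C q).

Lemma dir_spec x u : L u x -> L (u ++ [dir x u]) x.
Proof. intros H. apply (epsilon_spec _ (fun n => L (u ++ [n]) x)), (leaf_cover HL), H. Qed.

Lemma outside_C_spec u : L u (outside_C u) /\ ~ C (outside_C u).
Proof. apply (epsilon_spec _ (fun q => L u q /\ ~ C q)), leaf_meets_compl. Qed.

Lemma least_C_spec u : meets_C u ->
  C (least_C u) /\ L u (least_C u) /\ forall c, C c -> L u c -> f (least_C u) <= f c.
Proof.
  intros [c [Cc Lc]]. apply (epsilon_spec _ (fun c => C c /\ L u c /\ _)).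
  induction c as [c IH] using (induction_ltof1 _ f); unfold ltof in IH.
  destruct (classic (exists c', C c' /\ L u c' /\ f c' < f c)) as [[c' [? [? ?]]]|Hmin]; [eauto|].
  exists c. do 2 (split; auto). intros c' Cc' Lc'.
  destruct (Nat.le_gt_cases (f c) (f c')); [assumption | exfalso; eauto].
Qed.

Inductive node : Type :=
  | Cyl (u : list nat)
  | Pair (x : X) (u : list nat) (w : X) (v : list nat).

Definition node_leaf (s : node) : X -> Prop :=
  match s with
  | Cyl u => L u
  | Pair _ u _ v => fun p => L u p \/ L v p
  end.

Definition node_ok (s : node) : Prop :=
  match s with
  | Cyl _ => True
  | Pair x u w v => L u x /\ L v w /\ (forall p, L u p -> L v p -> False) /\
      ((C x /\ ~ C w) \/ (~ C x /\ C w))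
  end.

(* Child 0 carries the new pair; [skip] and [skip2] renumber the remaining old children
   as children 1, 2, .... *)
Definition child (s : node) (n : nat) : node :=
  match s with
  | Cyl u =>
      if excluded_middle_informative (meets_C u) then
        match n with
        | 0 => Pair (least_C u) (u ++ [dir (least_C u) u])
                 (outside_C (u ++ [S (dir (least_C u) u)])) (u ++ [S (dir (least_C u) u)])
        | S n => Cyl (u ++ [skip2 (dir (least_C u) u) n])
        end
      else Cyl (u ++ [n])
  | Pair x u w v =>
      match n with
      | 0 => Pair w v x (u ++ [dir x u])
      | S n => Cyl (u ++ [skip (dir x u) n])
      end
  end.

Lemma child_ok s n : node_ok s -> node_ok (child s n).
Proof.
  destruct s as [u|x u w v]; simpl; intros Hok.
  - destruct excluded_middle_informative as [h|]; [destruct n|]; simpl; auto.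
    destruct (least_C_spec h) as [Cc [Lc _]]. destruct (outside_C_spec (u ++ [S (dir (least_C u) u)])).
    repeat split; auto using dir_spec.
    intros p H1 H2. refine (leaf_disjoint HL _ H1 H2). lia.
  - destruct n; simpl; auto. destruct Hok as [Hx [Hw [Hdisj Hxw]]].
    repeat split; auto using dir_spec; [|tauto].
    intros p H1 H2. apply (Hdisj p); auto. exact (leaf_prefix HL (is_prefix_app _ _) H2).
Qed.

Lemma child_leaf_sub s n p : node_leaf (child s n) p -> node_leaf s p.
Proof.
  assert (Hsnoc : forall u k, L (u ++ [k]) p -> L u p)
    by (intros u k; apply (leaf_prefix HL), is_prefix_app).
  destruct s as [u|x u w v]; simpl.
  - destruct excluded_middle_informative; [destruct n|]; simpl; [intros [H|H]| |]; eauto.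
  - destruct n; simpl; [intros [H|H]|]; eauto.
Qed.

Lemma child_leaf_cover s p : node_leaf s p -> exists n, node_leaf (child s n) p.
Proof.
  destruct s as [u|x u w v]; simpl.
  - intros H. apply (leaf_cover HL) in H as [k Hk].
    destruct excluded_middle_informative; [|now exists k].
    set (b := dir (least_C u) u) in *.
    destruct (Nat.eq_dec k b) as [->|Hb]; [exists 0; simpl; auto|].
    destruct (Nat.eq_dec k (S b)) as [->|Hb']; [exists 0; simpl; auto|].
    destruct (skip2_surj Hb Hb') as [n Hn]. exists (S n). simpl. now rewrite Hn.
  - intros [H|H]; [|exists 0; simpl; auto].
    apply (leaf_cover HL) in H as [k Hk].
    destruct (Nat.eq_dec k (dir x u)) as [->|He]; [exists 0; simpl; auto|].
    destruct (skip_surj He) as [n Hn]. exists (S n). simpl. now rewrite Hn.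
Qed.

Lemma child_leaf_disjoint s n n' p : node_ok s -> n <> n' ->
  node_leaf (child s n) p -> node_leaf (child s n') p -> False.
Proof.
  assert (Hd : forall u k k', k <> k' -> L (u ++ [k]) p -> L (u ++ [k']) p -> False)
    by (intros u k k' Hk; exact (leaf_disjoint HL Hk)).
  destruct s as [u|x u w v]; simpl; intros Hok Hn.
  - destruct excluded_middle_informative; [|eauto].
    set (b := dir (least_C u) u) in *.
    destruct n as [|n], n' as [|n']; simpl; [lia| | |].
    + intros [H|H] H'; refine (Hd _ _ _ _ H H');
        [apply not_eq_sym, skip2_neq | apply not_eq_sym, skip2_neq_succ].
    + intros H' [H|H]; refine (Hd _ _ _ _ H' H); [apply skip2_neq | apply skip2_neq_succ].
    + intros H H'. refine (Hd _ _ _ _ H H'). intros E. apply skip2_inj in E. lia.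
  - destruct Hok as [_ [_ [Hdisj _]]]. set (e := dir x u).
    assert (Hsnoc : forall k, L (u ++ [k]) p -> L u p)
      by (intros k; apply (leaf_prefix HL), is_prefix_app).
    destruct n as [|n], n' as [|n']; simpl; [lia| | |].
    + intros [H|H] H'; [exact (Hdisj p (Hsnoc _ H') H)|].
      refine (Hd _ _ _ _ H H'). apply not_eq_sym, skip_neq.
    + intros H' [H|H]; [exact (Hdisj p (Hsnoc _ H') H)|].
      refine (Hd _ _ _ _ H' H). apply skip_neq.
    + intros H H'. refine (Hd _ _ _ _ H H'). intros E. apply skip_inj in E. lia.
Qed.

Lemma node_leaf_nonempty s : exists p, node_leaf s p.
Proof.
  destruct s as [u|x u w v]; destruct (leaf_nonempty HL u) as [p Hp]; exists p; simpl; auto.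
Qed.

Definition node_at (z : list nat) : node := fold_left child z (Cyl []).

Lemma node_at_snoc z n : node_at (z ++ [n]) = child (node_at z) n.
Proof. unfold node_at. now rewrite fold_left_app. Qed.

Lemma node_at_ok z : node_ok (node_at z).
Proof. induction z using rev_ind; [exact I|]. rewrite node_at_snoc. now apply child_ok. Qed.

Definition centered (s : node) (u : list nat) : Prop :=
  s = Cyl u \/ exists x w v, s = Pair x u w v.

Lemma node_at_centered u y : L u y -> exists z, node_leaf (node_at z) y /\ centered (node_at z) u.
Proof.
  revert y. induction u as [|n u IH] using rev_ind; intros y Hy.
  { exists []. split; [apply (leaf_root HL) | now left]. }
  destruct (IH y) as [z [Hz [Hc|[x [w [v Hc]]]]]]; [exact (leaf_prefix HL (is_prefix_app _ _) Hy)| |].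
  - destruct (excluded_middle_informative (meets_C u)) as [h|h].
    + set (b := dir (least_C u) u).
      destruct (Nat.eq_dec n b) as [->|Hb].
      { exists (z ++ [0]). rewrite node_at_snoc, Hc. simpl.
        destruct excluded_middle_informative; [|contradiction].
        split; [now left | right; eauto]. }
      destruct (Nat.eq_dec n (S b)) as [->|Hb'].
      { exists ((z ++ [0]) ++ [0]). rewrite !node_at_snoc, Hc. simpl.
        destruct excluded_middle_informative; [|contradiction]. simpl.
        split; [now left | right; eauto]. }
      destruct (skip2_surj Hb Hb') as [n' Hn'].
      exists (z ++ [S n']). rewrite node_at_snoc, Hc. simpl.
      destruct excluded_middle_informative; [|contradiction].
      fold b. rewrite Hn'. split; [exact Hy | now left].
    + exists (z ++ [n]). rewrite node_at_snoc, Hc. simpl.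
      destruct excluded_middle_informative; [contradiction|].
      split; [exact Hy | now left].
  - destruct (Nat.eq_dec n (dir x u)) as [->|He].
    + exists ((z ++ [0]) ++ [0]). rewrite !node_at_snoc, Hc. simpl.
      split; [now left | right; eauto].
    + destruct (skip_surj He) as [n' Hn'].
      exists (z ++ [S n']). rewrite node_at_snoc, Hc. simpl. rewrite Hn'.
      split; [exact Hy | now left].
Qed.

Lemma centered_child s u n : centered s u ->
  exists d, n <= d /\ forall p, node_leaf (child s (S n)) p -> L (u ++ [d]) p.
Proof.
  intros [->|[x [w [v ->]]]]; simpl.
  - destruct excluded_middle_informative; simpl.
    + exists (skip2 (dir (least_C u) u) n). split; [apply skip2_ge | auto].
    + exists (S n). split; auto.
  - exists (skip (dir x u) n). split; [apply skip_ge | auto].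
Qed.

Fixpoint follow (x : X) (u : list nat) (j : nat) : list nat :=
  match j with
  | 0 => u
  | S j => follow x u j ++ [dir x (follow x u j)]
  end.

Lemma follow_chain x u : chain (follow x u).
Proof. intros j. eexists. reflexivity. Qed.

Lemma follow_leaf x u j : L u x -> L (follow x u j) x.
Proof. intros H. induction j; simpl; auto using dir_spec. Qed.

Lemma follow_fruit x u q : L u x -> (forall j, L (follow x u j) q) <-> q = x.
Proof.
  intros Hx. destruct (leaf_chain HL (follow_chain x u)) as [pt Hpt].
  assert (x = pt) as -> by (apply Hpt; intros j; now apply follow_leaf).
  apply Hpt.
Qed.

Lemma chain_union s t y : chain s -> chain t -> (forall j, L (s j) y \/ L (t j) y) ->
  (forall j, L (s j) y) \/ (forall j, L (t j) y).
Proof.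
  intros Hs Ht H. destruct (classic (forall j, L (s j) y)) as [|Hnot]; [now left|right].
  apply not_all_ex_not in Hnot as [j0 Hj0]. intros j.
  destruct (Nat.le_ge_cases j j0) as [Hj|Hj].
  - destruct (H j0) as [|Ht0]; [contradiction|].
    exact (leaf_prefix HL (chain_is_prefix Ht Hj) Ht0).
  - destruct (H j) as [Hsj|]; [|assumption].
    exfalso. exact (Hj0 (leaf_prefix HL (chain_is_prefix Hs Hj) Hsj)).
Qed.

(* Once the least point c of C in a cylinder has been handled, c never lies in a later
   cylinder: it stays a distinguished point of the pairs below, or drops out. *)
Definition excludes (c : X) (s : node) : Prop :=
  ~ node_leaf s c \/ exists x u w v, s = Pair x u w v /\ (x = c \/ w = c).

Lemma excludes_child c s n : node_ok s -> excludes c s -> excludes c (child s n).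
Proof.
  intros Hok [Hc|[x [u [w [v [-> Hxw]]]]]].
  - left. intros H. exact (Hc (child_leaf_sub H)).
  - destruct n as [|n]; simpl.
    + right. do 4 eexists. split; [reflexivity | tauto].
    + left. destruct Hok as [Hx [Hw [Hdisj _]]]. intros H.
      destruct Hxw as [<-|<-].
      * refine (leaf_disjoint HL _ (dir_spec Hx) H). apply not_eq_sym, skip_neq.
      * exact (Hdisj w (leaf_prefix HL (is_prefix_app _ _) H) Hw).
Qed.

Lemma excludes_least_C u n : meets_C u -> excludes (least_C u) (child (Cyl u) n).
Proof.
  intros h. simpl. destruct excluded_middle_informative; [|contradiction].
  destruct n as [|n].
  - right. do 4 eexists. split; [reflexivity | now left].
  - left. simpl. intros H. destruct (least_C_spec h) as [_ [Hc _]].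
    refine (leaf_disjoint HL _ (dir_spec Hc) H). apply not_eq_sym, skip2_neq.
Qed.

Section Run.
Variables (sq : nat -> node) (m : nat -> nat).
Hypothesis sq0_ok : node_ok (sq 0).
Hypothesis sq_step : forall k, sq (S k) = child (sq k) (m k).

Lemma run_ok k : node_ok (sq k).
Proof. induction k; [exact sq0_ok|]. rewrite sq_step. now apply child_ok. Qed.

Lemma run_leaf_antitone k k' p : k <= k' -> node_leaf (sq k') p -> node_leaf (sq k) p.
Proof.
  intros H. induction H; [auto|]. intros Hp. apply IHle. rewrite sq_step in Hp.
  exact (child_leaf_sub Hp).
Qed.

Lemma run_pairs_fruit K : (forall k, K <= k -> (exists x u w v, sq k = Pair x u w v) /\ m k = 0) ->
  exists y, ~ C y /\ (forall k, node_leaf (sq k) y) /\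
    forall y', ~ C y' -> (forall k, node_leaf (sq k) y') -> y' = y.
Proof.
  intros HK. destruct (HK K (le_n _)) as [[x [u [w [v EK]]]] _].
  assert (OK := run_ok K). rewrite EK in OK. destruct OK as [Hx [Hw [_ Hxw]]].
  assert (Hj : forall j, sq (K + 2 * j) = Pair x (follow x u j) w (follow w v j)).
  { induction j; [now rewrite Nat.add_0_r|].
    replace (K + 2 * S j) with (S (S (K + 2 * j))) by lia.
    rewrite sq_step, (proj2 (HK (S (K + 2 * j)) ltac:(lia))).
    rewrite sq_step, (proj2 (HK (K + 2 * j) ltac:(lia))), IHj. reflexivity. }
  assert (Hin : forall y, (forall k, node_leaf (sq k) y) <-> y = x \/ y = w).
  { intros y. split.
    - intros H. assert (H' : forall j, L (follow x u j) y \/ L (follow w v j) y)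
        by (intros j; specialize (H (K + 2 * j)); now rewrite Hj in H).
      destruct (chain_union (follow_chain x u) (follow_chain w v) H') as [A|A];
        [left; now apply (follow_fruit y Hx) | right; now apply (follow_fruit y Hw)].
    - intros Hy k. apply (run_leaf_antitone (k' := K + 2 * k)); [lia|].
      rewrite Hj. destruct Hy as [-> | ->]; [left|right]; now apply follow_leaf. }
  destruct Hxw as [[Cx Cw]|[Cx Cw]]; [exists w | exists x];
    (split; [assumption | split; [apply Hin; auto|]]);
    intros y' Hy' H; apply Hin in H as [-> | ->]; tauto.
Qed.

Lemma run_cyl_sprefix k k' u u' : k < k' -> sq k = Cyl u -> sq k' = Cyl u' -> sprefix u u'.
Proof.
  intros Hk E E'.
  assert (Sub : forall p, L u' p -> node_leaf (child (Cyl u) (m k)) p).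
  { intros p P. rewrite <- E, <- sq_step. apply (run_leaf_antitone (k' := k')); [lia|].
    now rewrite E'. }
  destruct (leaf_nonempty HL u') as [q Hq].
  assert (Huq : L u q) by exact (child_leaf_sub (Sub q Hq)).
  assert (Hnot : ~ is_prefix u' u).
  { intros P. destruct (node_leaf_nonempty (child (Cyl u) (S (m k)))) as [p Hp].
    refine (child_leaf_disjoint (s := Cyl u) (n := S (m k)) (n' := m k) I _ Hp _); [lia|].
    apply Sub, (leaf_prefix HL P), (child_leaf_sub Hp). }
  destruct (leaf_comparable HL Huq Hq) as [P|P]; [|contradiction].
  destruct (is_prefix_cases P) as [<-|]; [exfalso; apply Hnot, is_prefix_refl | assumption].
Qed.

Section Cylinders.
Hypothesis cyl_often : forall K, exists k, K <= k /\ exists u, sq k = Cyl u.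

Lemma run_cyl_limit : exists r, forall y, (forall k, node_leaf (sq k) y) <-> y = r.
Proof.
  set (P u := exists k, sq k = Cyl u).
  assert (Hcmp : forall a b, P a -> P b -> is_prefix a b \/ is_prefix b a).
  { intros a b [k Ea] [k' Eb].
    destruct (Nat.lt_trichotomy k k') as [H|[<-|H]].
    - left. exact (sprefix_is_prefix (run_cyl_sprefix H Ea Eb)).
    - rewrite Ea in Eb. injection Eb as ->. left. apply is_prefix_refl.
    - right. exact (sprefix_is_prefix (run_cyl_sprefix H Eb Ea)). }
  assert (Hlong : forall j, exists a, P a /\ j <= length a).
  { induction j as [|j [a [[k Ea] Hj]]].
    - destruct (cyl_often 0) as [k [_ [a Ea]]]. exists a. split; [now exists k | lia].
    - destruct (cyl_often (S k)) as [k' [Hk' [a' Ea']]]. exists a'. split; [now exists k'|].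
      assert (H := sprefix_length (run_cyl_sprefix Hk' Ea Ea')). lia. }
  destruct (chain_of_comparable Hcmp Hlong) as [s [Hs [Hbelow Habove]]].
  destruct (leaf_chain HL Hs) as [r Hr]. exists r. intros y. rewrite <- Hr. split.
  - intros H j. destruct (Hbelow j) as [a [[k Ea] Hja]].
    specialize (H k). rewrite Ea in H. exact (leaf_prefix HL Hja H).
  - intros H k. destruct (cyl_often k) as [k' [Hk [a Ea]]].
    apply (run_leaf_antitone Hk). rewrite Ea, (Habove a); [apply H | now exists k'].
Qed.

Lemma run_cyl_excludes k k' u u' : k < k' -> sq k = Cyl u -> meets_C u -> sq k' = Cyl u' ->
  ~ L u' (least_C u).
Proof.
  intros Hk E h E'.
  assert (Hex : forall d, excludes (least_C u) (sq (S k + d))).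
  { induction d.
    - rewrite Nat.add_0_r, sq_step, E. now apply excludes_least_C.
    - rewrite Nat.add_succ_r, sq_step. apply excludes_child; [apply run_ok | exact IHd]. }
  destruct (Hex (k' - S k)) as [Hc|[x [u1 [w [v [Ep _]]]]]];
    replace (S k + (k' - S k)) with k' in * by lia; rewrite E' in *; [exact Hc | discriminate].
Qed.

Lemma run_cyl_outside_C r : (forall k, node_leaf (sq k) r) -> ~ C r.
Proof.
  intros Hr Cr.
  assert (Hmeets : forall k u, sq k = Cyl u -> meets_C u).
  { intros k u E. exists r. split; [exact Cr|]. specialize (Hr k). now rewrite E in Hr. }
  assert (Hincr : forall k k' u u', k < k' -> sq k = Cyl u -> sq k' = Cyl u' ->
            f (least_C u) < f (least_C u')).
  { intros k k' u u' Hk E E'.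
    destruct (least_C_spec (Hmeets _ _ E)) as [Cc [_ Hmin]].
    destruct (least_C_spec (Hmeets _ _ E')) as [Cc' [Lc' _]].
    assert (Hle : f (least_C u) <= f (least_C u'))
      by exact (Hmin _ Cc' (leaf_prefix HL (sprefix_is_prefix (run_cyl_sprefix Hk E E')) Lc')).
    assert (Hne : least_C u <> least_C u').
    { intros Eq. apply (run_cyl_excludes Hk E (Hmeets _ _ E) E'). now rewrite Eq. }
    assert (f (least_C u) <> f (least_C u')) by (intros Ef; exact (Hne (f_inj Cc Cc' Ef))).
    lia. }
  assert (Hgrow : forall N, exists k u, sq k = Cyl u /\ N <= f (least_C u)).
  { induction N as [|N [k [u [E HN]]]].
    - destruct (cyl_often 0) as [k [_ [u E]]]. exists k, u. split; [exact E | lia].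
    - destruct (cyl_often (S k)) as [k' [Hk' [u' E']]]. exists k', u'. split; [exact E'|].
      specialize (Hincr _ _ _ _ Hk' E E'). lia. }
  destruct (Hgrow (S (f r))) as [k [u [E HN]]].
  destruct (least_C_spec (Hmeets _ _ E)) as [_ [_ Hmin]].
  assert (Lr : L u r) by (specialize (Hr k); now rewrite E in Hr).
  specialize (Hmin r Cr Lr). lia.
Qed.

End Cylinders.

Lemma run_fruit : exists y, ~ C y /\ (forall k, node_leaf (sq k) y) /\
  forall y', ~ C y' -> (forall k, node_leaf (sq k) y') -> y' = y.
Proof.
  destruct (classic (exists K, forall k, K <= k -> (exists x u w v, sq k = Pair x u w v) /\ m k = 0))
    as [[K HK]|Hnot]; [exact (run_pairs_fruit HK)|].
  assert (Hoften : forall K, exists k, K <= k /\ exists u, sq k = Cyl u).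
  { intros K. apply not_ex_all_not with (n := K) in Hnot.
    apply not_all_ex_not in Hnot as [k Hk]. apply imply_to_and in Hk as [HKk Hk].
    destruct (sq k) as [u|x u w v] eqn:E; [exists k; eauto|].
    exists (S k). split; [lia|]. rewrite sq_step, E.
    destruct (m k) as [|n]; [exfalso; apply Hk; split; eauto | simpl; eauto]. }
  destruct (run_cyl_limit Hoften) as [r Hr].
  assert (Hrin : forall k, node_leaf (sq k) r) by now apply Hr.
  exists r. split; [exact (run_cyl_outside_C Hoften Hrin)|]. split; [exact Hrin|].
  intros y' _ H. now apply Hr.
Qed.

End Run.

Definition compl_leaf (z : list nat) (y : compl_sub C) : Prop := node_leaf (node_at z) (proj1_sig y).

Lemma list_pi_tree_compl : is_topology opn -> list_pi_tree (@subspace_open X opn C) compl_leaf.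
Proof.
  intros Htop. split.
  - intros y. apply (leaf_root HL).
  - intros z. unfold subspace_open, compl_leaf.
    destruct (node_at z) as [u|x u w v]; simpl.
    + exists (L u). split; [apply (leaf_open HL) | tauto].
    + destruct (open_union2 Htop (leaf_open HL u) (leaf_open HL v)) as [U [HU HUe]].
      exists U. split; [exact HU|]. intros y. now rewrite HUe.
  - intros z y. unfold compl_leaf. split.
    + intros H. destruct (child_leaf_cover H) as [n Hn]. exists n. now rewrite node_at_snoc.
    + intros [n Hn]. rewrite node_at_snoc in Hn. exact (child_leaf_sub Hn).
  - intros z n n' y Hn. unfold compl_leaf. rewrite !node_at_snoc.
    exact (child_leaf_disjoint (node_at_ok z) Hn).
  - intros s Hs. destruct (choice _ Hs) as [m Hm].
    destruct (run_fruit (sq := fun k => node_at (s k)) (m := m)) as [y [Cy [Hy Huniq]]].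
    + apply node_at_ok.
    + intros k. simpl. now rewrite Hm, node_at_snoc.
    + exists (exist _ y Cy). intros [q Cq]. unfold compl_leaf. simpl. split.
      * intros H. assert (q = y) as -> by now apply Huniq. f_equal. apply proof_irrelevance.
      * intros E. injection E as ->. exact Hy.
  - intros [p Cp] W [U [HU HWU]] Wp. apply HWU in Wp. simpl in Wp.
    destruct (leaf_grows HL HU Wp) as [u [Hu [N HN]]].
    destruct (node_at_centered Hu) as [z [Hz Hc]].
    exists z. split; [exact Hz|]. exists (S N). intros [|n] Hn q Hq; [lia|].
    apply HWU. unfold compl_leaf in Hq. rewrite node_at_snoc in Hq.
    destruct (centered_child n Hc) as [d [Hd Hdq]].
    exact (HN d ltac:(lia) _ (Hdq _ Hq)).
Qed.

End Complement.

Theorem mainTheorem2 (X : Type) (opn : (X -> Prop) -> Prop) (C : X -> Prop) :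
  is_topology opn -> at_most_countable C -> has_pi_tree opn ->
  @has_pi_tree (compl_sub C) (@subspace_open X opn C).
Proof.
  intros Htop [f Hf] Hpi.
  destruct (list_pi_tree_of_has_pi_tree Hpi) as [L HL].
  exists (list nat), sprefix, (compl_leaf f HL).
  apply pi_tree_of_list_pi_tree, (list_pi_tree_compl Hf HL Htop).
Qed.
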